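(* At points $(\tau,\eta)\in\Sigma$: if $a_{12}=0$, then $\partial_\gamma a_{12}\neq0$ and $\partial_\gamma a_{21}\neq0$; if $a_{21}=0$, then $\partial_\gamma a_{12}\neq0$ and $\partial_\gamma a_{21}\neq0$; if $a_{34}=0$, then $\partial_\gamma a_{34}\neq0$.
   Context: Constants of a basic state: $\dot v\neq0$, $\dot\rho>0$, $\dot H\neq0$, $\dot\alpha>0$ with $\dot\alpha\dot H^2\neq1$; $\varepsilon>0$ a parameter. Write $\tau=\gamma+i\delta$, $\Sigma=\{(\tau,\eta)\in\mathbb C\times\mathbb R:|\tau|^2+\eta^2=1,\ \gamma\ge0\}$, $\mu=\tau+i\dot v\eta$, and \[ a_{12}=-\frac{\mu^2\dot\rho+\eta^2\dot H^2}{\mu},\quad a_{21}=-\frac{\mu(\dot\alpha\dot\rho\mu^2+\eta^2)}{(\mu^2\dot\rho\dot\alpha+\eta^2)\dot H^2+\mu^2\dot\rho},\quad a_{34}=-\frac{\varepsilon^2\tau^2+\eta^2}{\varepsilon\tau}, \] considered at points where they are defined; $\partial_\gamma$ denotes the partial derivative in $\gamma$ with $\delta,\eta$ fixed. *)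

From Stdlib Require Import Reals.
From Coquelicot Require Import Coquelicot.
Open Scope R_scope.

Definition tau (g d : R) : C := (g, d).

Definition mu (v g d eta : R) : C := Cplus (tau g d) (Cmult Ci (RtoC (v * eta))).

Definition a12 (v rho H g d eta : R) : C :=
  let m := mu v g d eta in
  Copp (Cdiv (Cplus (Cmult (Cmult m m) (RtoC rho)) (RtoC (eta ^ 2 * H ^ 2))) m).

Definition a21_den (v rho H alpha g d eta : R) : C :=
  let m := mu v g d eta in
  Cplus (Cmult (Cplus (Cmult (Cmult m m) (RtoC (rho * alpha))) (RtoC (eta ^ 2)))
               (RtoC (H ^ 2)))
        (Cmult (Cmult m m) (RtoC rho)).

Definition a21 (v rho H alpha g d eta : R) : C :=
  let m := mu v g d eta in
  Copp (Cdiv (Cmult m (Cplus (Cmult (RtoC (alpha * rho)) (Cmult m m)) (RtoC (eta ^ 2))))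
             (a21_den v rho H alpha g d eta)).

Definition a34 (eps g d eta : R) : C :=
  let t := tau g d in
  Copp (Cdiv (Cplus (Cmult (RtoC (eps ^ 2)) (Cmult t t)) (RtoC (eta ^ 2)))
             (Cmult (RtoC eps) t)).

(* "partial_gamma f <> 0 at gamma": the partial derivative in gamma
   (delta, eta fixed) exists and is nonzero. f is given as a function of gamma. *)
Definition dgamma_nonzero (f : R -> C) (g : R) : Prop :=
  exists l : C, is_derive f g l /\ l <> RtoC 0.

From Stdlib Require Import Reals Lra.
From Coquelicot Require Import Coquelicot.
Open Scope R_scope.

(* Each coefficient is a rational function of mu = tau + i v eta (of tau for a34), and
   d mu / d gamma = 1, so the gamma-derivatives are complex derivatives in mu, computed
   componentwise.  At a zero of a coefficient the vanishing relation collapses the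
   derivative to an explicit value: -2 rho for a12 at its zeros, -rho (1 + alpha H^2) for
   a12 at zeros of a21, -(x^2 - x + 2) / (alpha^2 H^6) with x = alpha H^2 for a21 at zeros
   of a12, -(3 alpha rho mu^2 + eta^2) / den for a21 at its zeros (the numerator cannot
   vanish together with mu (alpha rho mu^2 + eta^2) since eta <> 0), and -2 eps for a34. *)

Lemma is_derive_eq {K : AbsRing} {V : NormedModule K} (f : K -> V) x l l' :
  is_derive f x l -> l = l' -> is_derive f x l'.
Proof. now intros h <-. Qed.

Lemma RtoC_neq0 (r : R) : r <> 0 -> RtoC r <> RtoC 0.
Proof. intros hr e; apply hr; now rewrite <- (re_RtoC r), e. Qed.

Lemma Copp_div_eq0 (x y : C) : y <> RtoC 0 -> (- (x / y))%C = RtoC 0 -> x = RtoC 0.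
Proof.
  intros hy e.
  replace x with (- (- (x / y)) * y)%C by (field; exact hy).
  rewrite e; ring.
Qed.

Lemma is_derive_Re (f : R -> C) x l :
  is_derive f x l -> is_derive (fun t => Re (f t)) x (Re l).
Proof.
  intro h.
  apply (filterdiff_ext_lin _ (fun y : R => fst (scal y l))).
  - apply (filterdiff_comp f fst _ fst h), filterdiff_linear, is_linear_fst.
  - reflexivity.
Qed.

Lemma is_derive_Im (f : R -> C) x l :
  is_derive f x l -> is_derive (fun t => Im (f t)) x (Im l).
Proof.
  intro h.
  apply (filterdiff_ext_lin _ (fun y : R => snd (scal y l))).
  - apply (filterdiff_comp f snd _ snd h), filterdiff_linear, is_linear_snd.
  - reflexivity.
Qed.

Lemma is_derive_C (f : R -> C) x l :
  is_derive (fun t => Re (f t)) x (Re l) -> is_derive (fun t => Im (f t)) x (Im l) ->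
  is_derive f x l.
Proof.
  intros hre him.
  apply (filterdiff_ext (fun t => (Re (f t), Im (f t)))); [intro t; now destruct (f t)|].
  apply (filterdiff_ext_lin _ (fun y : R => (scal y (Re l), scal y (Im l)))); [|now destruct l].
  apply (filterdiff_comp_2 _ _ pair _ _ pair hre him), filterdiff_linear.
  split; [intros [] []| intros ? []|exists 1; split; [lra|intros []]]; try reflexivity.
  rewrite Rmult_1_l; apply Rle_refl.
Qed.

Lemma is_derive_Cplus (f g : R -> C) x df dg :
  is_derive f x df -> is_derive g x dg ->
  is_derive (fun t => (f t + g t)%C) x (df + dg)%C.
Proof. exact (is_derive_plus f g x df dg). Qed.

Lemma is_derive_Copp (f : R -> C) x df :
  is_derive f x df -> is_derive (fun t => (- f t)%C) x (- df)%C.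
Proof. exact (is_derive_opp f x df). Qed.

Lemma is_derive_Cconst (c : C) (x : R) : is_derive (fun _ : R => c) x (RtoC 0).
Proof. exact (is_derive_const (K := R_AbsRing) c x). Qed.

Lemma is_derive_Cmult (f g : R -> C) x df dg :
  is_derive f x df -> is_derive g x dg ->
  is_derive (fun t => (f t * g t)%C) x (df * g x + f x * dg)%C.
Proof.
  intros hf hg.
  apply is_derive_C.
  - apply (is_derive_ext (fun t => minus (Re (f t) * Re (g t)) (Im (f t) * Im (g t))));
      [reflexivity|].
    replace (Re (df * g x + f x * dg)) with
      (minus (Re df * Re (g x) + Re (f x) * Re dg) (Im df * Im (g x) + Im (f x) * Im dg))
      by (unfold minus, plus, opp, Re, Im; simpl; ring).
    apply (is_derive_minus (fun t => Re (f t) * Re (g t)) (fun t => Im (f t) * Im (g t)));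
      apply Derive.is_derive_mult;
      auto using is_derive_Re, is_derive_Im.
  - apply (is_derive_ext (fun t => plus (Re (f t) * Im (g t)) (Im (f t) * Re (g t))));
      [reflexivity|].
    replace (Im (df * g x + f x * dg)) with
      (plus (Re df * Im (g x) + Re (f x) * Im dg) (Im df * Re (g x) + Im (f x) * Re dg))
      by (unfold plus, Re, Im; simpl; ring).
    apply (is_derive_plus (fun t => Re (f t) * Im (g t)) (fun t => Im (f t) * Re (g t)));
      apply Derive.is_derive_mult;
      auto using is_derive_Re, is_derive_Im.
Qed.

Lemma is_derive_Cinv (f : R -> C) x df :
  is_derive f x df -> f x <> RtoC 0 ->
  is_derive (fun t => / f t)%C x (- df / (f x * f x))%C.
Proof.
  intros hf hfx.
  set (q t := Re (f t) ^ 2 + Im (f t) ^ 2).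
  assert (hq : is_derive q x (2 * Re (f x) * Re df + 2 * Im (f x) * Im df)).
  { eapply is_derive_eq;
      [apply (is_derive_plus (fun t => Re (f t) ^ 2) (fun t => Im (f t) ^ 2));
        [apply is_derive_pow, is_derive_Re, hf | apply is_derive_pow, is_derive_Im, hf]|].
    unfold plus; simpl; ring. }
  assert (hqx : q x <> 0).
  { unfold q; destruct (f x) as [a b]; simpl.
    intro e; apply hfx.
    assert (a = 0) by nra; assert (b = 0) by nra; subst; reflexivity. }
  apply is_derive_C;
    [ apply (is_derive_ext (fun t => Re (f t) * / q t)); [reflexivity|];
      eapply is_derive_eq;
        [apply Derive.is_derive_mult;
          [apply (is_derive_Re _ _ _ hf) | apply (is_derive_inv _ _ _ hq hqx)]|]
    | apply (is_derive_ext (fun t => - Im (f t) * / q t)); [reflexivity|];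
      eapply is_derive_eq;
        [apply Derive.is_derive_mult;
          [apply (is_derive_opp (fun t => Im (f t))), (is_derive_Im _ _ _ hf)
          | apply (is_derive_inv _ _ _ hq hqx)]|] ].
  all: unfold q in *; destruct (f x) as [a b], df as [a' b']; unfold opp; simpl in *.
  all: assert (hab : a * a + b * b <> 0) by (contradict hqx; nra).
  all: field; split; [|exact hab].
  all: replace (_ + _) with ((a * a + b * b) * (a * a + b * b)) by ring.
  all: now apply Rmult_integral_contrapositive_currified.
Qed.

Lemma is_derive_tau (d x : R) : is_derive (fun t => tau t d) x (RtoC 1).
Proof.
  apply is_derive_C; simpl.
  - apply (is_derive_id (K := R_AbsRing)).
  - apply (is_derive_const (K := R_AbsRing) (V := R_NormedModule)).
Qed.

Lemma is_derive_mu (v d eta x : R) : is_derive (fun t => mu v t d eta) x (RtoC 1).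
Proof.
  eapply is_derive_eq;
    [apply (is_derive_Cplus (fun t => tau t d)); [apply is_derive_tau | apply is_derive_Cconst]|].
  apply Cplus_0_r.
Qed.

Ltac derive_C :=
  repeat match goal with
  | |- is_derive (fun t => mu _ t _ _) _ _ => apply is_derive_mu
  | |- is_derive (fun t => tau t _) _ _ => apply is_derive_tau
  | |- is_derive (fun t => Copp (@?f t)) _ _ => apply (is_derive_Copp f)
  | |- is_derive (fun t => Cplus (@?f t) (@?g t)) _ _ => apply (is_derive_Cplus f g)
  | |- is_derive (fun t => Cmult (@?f t) (@?g t)) _ _ => apply (is_derive_Cmult f g)
  | |- is_derive (fun t => Cinv (@?f t)) _ _ => apply (is_derive_Cinv f)
  | |- is_derive (fun _ => _) _ _ => apply is_derive_Cconst
  end.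

Ltac derive_C_eq :=
  eapply is_derive_eq; [derive_C | match goal with |- ?a = ?b => change (@eq C a b) end].

Ltac push_RtoC :=
  repeat progress rewrite ?RtoC_opp, ?RtoC_plus, ?RtoC_minus, ?RtoC_mult, ?RtoC_pow.

Section Coefficients.
Context {v rho H alpha g d eta : R}.
Local Notation m := (mu v g d eta).

Lemma a12_derive_at_a12_root :
  m <> RtoC 0 -> a12 v rho H g d eta = RtoC 0 ->
  is_derive (fun t => a12 v rho H t d eta) g (RtoC (- (2 * rho))).
Proof.
  intros hm h12.
  unfold a12, Cdiv; derive_C_eq; [exact hm|].
  apply Copp_div_eq0 in h12; [|exact hm].
  rewrite h12, RtoC_opp, RtoC_mult.
  field; exact hm.
Qed.

Lemma rho_at_a12_root :
  m <> RtoC 0 -> a12 v rho H g d eta = RtoC 0 ->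
  RtoC rho = (- (RtoC eta ^ 2 * RtoC H ^ 2) / (m * m))%C.
Proof.
  intros hm h12.
  apply Copp_div_eq0 in h12; [|exact hm].
  rewrite RtoC_mult, !RtoC_pow in h12.
  replace (RtoC rho) with ((m * m * RtoC rho + RtoC eta ^ 2 * RtoC H ^ 2 - RtoC eta ^ 2 * RtoC H ^ 2) / (m * m))%C
    by (field; exact hm).
  rewrite h12; field; exact hm.
Qed.

Lemma eta_neq0_at_a12_root :
  0 < rho -> m <> RtoC 0 -> a12 v rho H g d eta = RtoC 0 -> eta <> 0.
Proof.
  intros hrho hm h12 he.
  apply (RtoC_neq0 rho); [lra|].
  rewrite (rho_at_a12_root hm h12).
  replace (RtoC eta) with (RtoC 0) by now rewrite he.
  field; exact hm.
Qed.

Lemma a21_den_at_a12_root :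
  m <> RtoC 0 -> a12 v rho H g d eta = RtoC 0 ->
  a21_den v rho H alpha g d eta = RtoC (- (alpha * eta ^ 2 * H ^ 4)).
Proof.
  intros hm h12.
  unfold a21_den; rewrite RtoC_opp, !RtoC_mult, !RtoC_pow, (rho_at_a12_root hm h12).
  field; exact hm.
Qed.

Lemma a21_derive_at_a12_root :
  0 < rho -> H <> 0 -> 0 < alpha ->
  m <> RtoC 0 -> a12 v rho H g d eta = RtoC 0 ->
  is_derive (fun t => a21 v rho H alpha t d eta) g
    (RtoC (- (alpha ^ 2 * H ^ 4 - alpha * H ^ 2 + 2) / (alpha ^ 2 * H ^ 6))).
Proof.
  intros hrho hH halpha hm h12.
  pose proof (eta_neq0_at_a12_root hrho hm h12) as he.
  assert (hD : a21_den v rho H alpha g d eta <> RtoC 0).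
  { rewrite (a21_den_at_a12_root hm h12); apply RtoC_neq0.
    apply Ropp_neq_0_compat; repeat apply Rmult_integral_contrapositive_currified;
      auto using pow_nonzero; lra. }
  unfold a21, a21_den, Cdiv; derive_C_eq; [exact hD|].
  fold (a21_den v rho H alpha g d eta).
  rewrite (a21_den_at_a12_root hm h12).
  assert (hα : RtoC alpha <> RtoC 0) by (apply RtoC_neq0; lra).
  assert (hη : RtoC eta <> RtoC 0) by (apply RtoC_neq0; exact he).
  assert (hH' : RtoC H <> RtoC 0) by (apply RtoC_neq0; exact hH).
  rewrite RtoC_div by (apply Rmult_integral_contrapositive_currified; apply pow_nonzero; lra).
  push_RtoC; rewrite (rho_at_a12_root hm h12).
  field; auto.
Qed.

Lemma a21_num_at_a21_root :
  a21_den v rho H alpha g d eta <> RtoC 0 -> a21 v rho H alpha g d eta = RtoC 0 ->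
  (m * (RtoC (alpha * rho) * (m * m) + RtoC (eta ^ 2)))%C = RtoC 0.
Proof. intros hD h21; exact (Copp_div_eq0 _ _ hD h21). Qed.

Lemma eta_neq0_at_a21_root :
  0 < rho -> 0 < alpha ->
  a21_den v rho H alpha g d eta <> RtoC 0 -> a21 v rho H alpha g d eta = RtoC 0 -> eta <> 0.
Proof.
  intros hrho halpha hD h21 he.
  pose proof (a21_num_at_a21_root hD h21) as hN.
  assert (hm : m <> RtoC 0).
  { intro hm0; apply hD; unfold a21_den; rewrite hm0, he, RtoC_pow; ring. }
  apply (Cmult_neq_0 (RtoC (alpha * rho)) (m * m * m)).
  - apply RtoC_neq0; nra.
  - repeat apply Cmult_neq_0; exact hm.
  - rewrite <- hN, he, RtoC_pow; ring.
Qed.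

Lemma eta_sq_at_a21_root :
  a21_den v rho H alpha g d eta <> RtoC 0 -> a21 v rho H alpha g d eta = RtoC 0 ->
  m <> RtoC 0 ->
  (RtoC eta ^ 2 = - (RtoC alpha * RtoC rho * (m * m)))%C.
Proof.
  intros hD h21 hm.
  pose proof (a21_num_at_a21_root hD h21) as hN.
  rewrite RtoC_mult, RtoC_pow in hN.
  replace (RtoC eta ^ 2)%C with
    ((m * (RtoC alpha * RtoC rho * (m * m) + RtoC eta ^ 2)) / m - RtoC alpha * RtoC rho * (m * m))%C
    by (field; exact hm).
  rewrite hN; field; exact hm.
Qed.

Lemma a12_derive_at_a21_root :
  a21_den v rho H alpha g d eta <> RtoC 0 -> a21 v rho H alpha g d eta = RtoC 0 ->
  m <> RtoC 0 ->
  is_derive (fun t => a12 v rho H t d eta) g (RtoC (- (rho * (1 + alpha * H ^ 2)))).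
Proof.
  intros hD h21 hm.
  unfold a12, Cdiv; derive_C_eq; [exact hm|].
  push_RtoC; rewrite (eta_sq_at_a21_root hD h21 hm).
  field; exact hm.
Qed.

Lemma a21_derive_at_a21_root :
  a21_den v rho H alpha g d eta <> RtoC 0 -> a21 v rho H alpha g d eta = RtoC 0 ->
  is_derive (fun t => a21 v rho H alpha t d eta) g
    (- ((RtoC 3 * RtoC (alpha * rho) * (m * m) + RtoC (eta ^ 2)) / a21_den v rho H alpha g d eta))%C.
Proof.
  intros hD h21.
  pose proof (a21_num_at_a21_root hD h21) as hN.
  unfold a21, a21_den, Cdiv; derive_C_eq; [exact hD|].
  fold (a21_den v rho H alpha g d eta).
  rewrite hN.
  field; exact hD.
Qed.

Lemma a21_num_derive_neq0_at_a21_root :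
  0 < rho -> 0 < alpha ->
  a21_den v rho H alpha g d eta <> RtoC 0 -> a21 v rho H alpha g d eta = RtoC 0 ->
  (RtoC 3 * RtoC (alpha * rho) * (m * m) + RtoC (eta ^ 2))%C <> RtoC 0.
Proof.
  intros hrho halpha hD h21 hX.
  pose proof (a21_num_at_a21_root hD h21) as hN.
  assert (he2 : RtoC (eta ^ 2) <> RtoC 0)
    by (apply RtoC_neq0, pow_nonzero, (eta_neq0_at_a21_root hrho halpha hD h21)).
  assert (h2 : RtoC 2 <> RtoC 0) by (apply RtoC_neq0; lra).
  assert (hm : m = RtoC 0).
  { replace m with ((RtoC 3 * (m * (RtoC (alpha * rho) * (m * m) + RtoC (eta ^ 2)))
                    - m * (RtoC 3 * RtoC (alpha * rho) * (m * m) + RtoC (eta ^ 2)))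
                    / (RtoC 2 * RtoC (eta ^ 2)))%C.
    - rewrite hN, hX; field; auto.
    - field; auto. }
  apply he2; rewrite <- hX, hm; ring.
Qed.
End Coefficients.

Lemma a34_derive_at_a34_root (eps g d eta : R) :
  0 < eps -> tau g d <> RtoC 0 -> a34 eps g d eta = RtoC 0 ->
  is_derive (fun t => a34 eps t d eta) g (RtoC (- (2 * eps))).
Proof.
  intros heps ht h34.
  assert (hε : RtoC eps <> RtoC 0) by (apply RtoC_neq0; lra).
  apply Copp_div_eq0 in h34; [|now apply Cmult_neq_0].
  unfold a34, Cdiv; derive_C_eq; [now apply Cmult_neq_0|].
  rewrite h34; push_RtoC.
  field; auto.
Qed.

Theorem lemma7p5 (v rho H alpha eps : R)
  (hv : v <> 0) (hrho : 0 < rho) (hH : H <> 0) (halpha : 0 < alpha)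
  (hαH : alpha * H ^ 2 <> 1) (heps : 0 < eps)
  (g d eta : R) (hΣ : g ^ 2 + d ^ 2 + eta ^ 2 = 1) (hg : 0 <= g) :
  (* a12 = 0 (a12 defined: mu <> 0) *)
  (mu v g d eta <> RtoC 0 -> a12 v rho H g d eta = RtoC 0 ->
     dgamma_nonzero (fun g' => a12 v rho H g' d eta) g /\
     dgamma_nonzero (fun g' => a21 v rho H alpha g' d eta) g) /\
  (* a21 = 0 (a21 defined: denominator <> 0) *)
  (a21_den v rho H alpha g d eta <> RtoC 0 -> a21 v rho H alpha g d eta = RtoC 0 ->
     (mu v g d eta <> RtoC 0 -> dgamma_nonzero (fun g' => a12 v rho H g' d eta) g) /\
     dgamma_nonzero (fun g' => a21 v rho H alpha g' d eta) g) /\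
  (* a34 = 0 (a34 defined: tau <> 0) *)
  (tau g d <> RtoC 0 -> a34 eps g d eta = RtoC 0 ->
     dgamma_nonzero (fun g' => a34 eps g' d eta) g).
Proof.
  split; [|split].
  - intros hm h12; split.
    + eexists; split; [now apply a12_derive_at_a12_root | apply RtoC_neq0; lra].
    + eexists; split; [now apply a21_derive_at_a12_root | apply RtoC_neq0].
      assert (hp : 0 < (alpha * H ^ 2) ^ 2 - alpha * H ^ 2 + 2) by nra.
      unfold Rdiv; apply Rmult_integral_contrapositive_currified.
      * replace (alpha ^ 2 * H ^ 4) with ((alpha * H ^ 2) ^ 2) by ring; lra.
      * apply Rinv_neq_0_compat, Rmult_integral_contrapositive_currified;
          apply pow_nonzero; lra.
  - intros hD h21; split.
    + intro hm; eexists; split; [exact (a12_derive_at_a21_root hD h21 hm)|].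
      apply RtoC_neq0, Rlt_not_eq, Ropp_lt_gt_0_contravar, Rmult_lt_0_compat; [lra|].
      pose proof (pow2_ge_0 H); nra.
    + eexists; split; [exact (a21_derive_at_a21_root hD h21)|].
      intro e; exact (a21_num_derive_neq0_at_a21_root hrho halpha hD h21 (Copp_div_eq0 _ _ hD e)).
  - intros ht h34; eexists; split; [now apply a34_derive_at_a34_root | apply RtoC_neq0; lra].
Qed.
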